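(* Let $N$ be a graded ideal of a Lie superalgebra $L$. Then $N\subseteq Z^{\wedge}(L)$ if and only if the natural map $L\wedge L\to (L/N)\wedge(L/N)$, $x\wedge y\mapsto (x+N)\wedge(y+N)$, is a monomorphism.
   Context: All algebras are over a field $\mathbb{F}$ of characteristic $\neq 2,3$. Non-abelian tensor square: $L\otimes L$ is the Lie superalgebra generated by symbols $x\otimes y$ ($x,y$ homogeneous, $|x\otimes y|=|x|+|y|$) subject to bilinearity, $[x,x']\otimes y=x\otimes[x',y]-(-1)^{|x||x'|}x'\otimes[x,y]$, $x\otimes[y,y']=(-1)^{|y'|(|x|+|y|)}[y',x]\otimes y-(-1)^{|x||y|}[y,x]\otimes y'$, and $[x\otimes y,x'\otimes y']=-(-1)^{|x||y|}[y,x]\otimes[x',y']$. The exterior square is $L\wedge L=(L\otimes L)/(L\square L)$, where $L\square L$ is the graded ideal generated by $x\otimes y+(-1)^{|x||y|}y\otimes x$ for homogeneous $x,y$ and by $x_0\otimes x_0$ for $x_0\in L_{\bar 0}$; the image of $x\otimes y$ is written $x\wedge y$. The exterior center is $Z^{\wedge}(L)=\{x\in L: x\wedge y=0 \text{ for all } y\in L\}$. *)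

From HB Require Import structures.
From mathcomp Require Import all_boot all_order all_algebra.
Set Implicit Arguments. Unset Strict Implicit. Unset Printing Implicit Defensive.
Import GRing.Theory.
Local Open Scope ring_scope.

(* (-1)^(a b) for degrees a b in Z/2 = bool *)
Definition sgn (F : pzRingType) (a b : bool) : F := if a && b then -1 else 1.

Section Defs.
Variable F : fieldType.

Definition homog (V : lmodType F) (V0 V1 : V -> Prop) (b : bool) (x : V) : Prop :=
  if b then V1 x else V0 x.

Definition subspace (V : lmodType F) (S : V -> Prop) : Prop :=
  S 0 /\ forall (a : F) (x y : V), S x -> S y -> S (a *: x + y).

Definition is_lie_super (V : lmodType F) (V0 V1 : V -> Prop) (br : V -> V -> V) : Prop :=
  subspace V0 /\ subspace V1 /\
  (forall x, exists x0 x1, V0 x0 /\ V1 x1 /\ x = x0 + x1) /\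
  (forall x, V0 x -> V1 x -> x = 0) /\
  (forall (a : F) x y z, br (a *: x + y) z = a *: br x z + br y z) /\
  (forall (a : F) x y z, br z (a *: x + y) = a *: br z x + br z y) /\
  (forall a b x y, homog V0 V1 a x -> homog V0 V1 b y -> homog V0 V1 (a (+) b) (br x y)) /\
  (forall a b x y, homog V0 V1 a x -> homog V0 V1 b y -> br x y = - (sgn F a b *: br y x)) /\
  (forall a b c x y z, homog V0 V1 a x -> homog V0 V1 b y -> homog V0 V1 c z ->
      sgn F a c *: br x (br y z) + sgn F b a *: br y (br z x)
      + sgn F c b *: br z (br x y) = 0).

Record LieSuper := MkLieSuper {
  LS_V :> lmodType F;
  LS_ev : LS_V -> Prop;
  LS_od : LS_V -> Prop;
  LS_br : LS_V -> LS_V -> LS_V;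
  LS_ax : is_lie_super LS_ev LS_od LS_br
}.

Definition hmg (L : LieSuper) (b : bool) (x : L) : Prop := homog (@LS_ev L) (@LS_od L) b x.

Definition lie_hom (L M : LieSuper) (f : L -> M) : Prop :=
  [/\ (forall (a : F) (x y : L), f (a *: x + y) = a *: f x + f y),
      (forall x y, f (LS_br x y) = LS_br (f x) (f y))
    & (forall b x, hmg b x -> hmg b (f x))].

Definition graded_ideal (L : LieSuper) (N : L -> Prop) : Prop :=
  [/\ subspace N,
      (forall x, N x -> exists x0 x1,
          [/\ N x0, @LS_ev L x0, N x1, @LS_od L x1 & x = x0 + x1]),
      (forall x y, N y -> N (LS_br x y))
    & (forall x y, N x -> N (LS_br x y))].

(* A bilinear map f : L x L -> M satisfying the defining relations of the
   non-abelian tensor square together with those of L [] L, i.e. a map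
   factoring through L /\ L. *)
Definition ext_pairing (L M : LieSuper) (f : L -> L -> M) : Prop :=
  (forall (a : F) x y z, f (a *: x + y) z = a *: f x z + f y z) /\
  (forall (a : F) x y z, f z (a *: x + y) = a *: f z x + f z y) /\
  (forall a b x y, hmg a x -> hmg b y -> hmg (a (+) b) (f x y)) /\
  (forall a a' b x x' y, hmg a x -> hmg a' x' -> hmg b y ->
     f (LS_br x x') y = f x (LS_br x' y) - sgn F a a' *: f x' (LS_br x y)) /\
  (forall a b b' x y y', hmg a x -> hmg b y -> hmg b' y' ->
     f x (LS_br y y') = sgn F b' (a (+) b) *: f (LS_br y' x) y
                        - sgn F a b *: f (LS_br y x) y') /\
  (forall a b a' b' x y x' y', hmg a x -> hmg b y -> hmg a' x' -> hmg b' y' ->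
     LS_br (f x y) (f x' y') = - (sgn F a b *: f (LS_br y x) (LS_br x' y'))) /\
  (forall a b x y, hmg a x -> hmg b y -> f x y + sgn F a b *: f y x = 0) /\
  (forall x, @LS_ev L x -> f x x = 0).

(* (W, w) is the exterior square L /\ L with w x y = x /\ y :
   the universal exterior pairing (the Lie superalgebra presented by the
   generators x /\ y and the relations above). *)
Definition is_ext_square (L W : LieSuper) (w : L -> L -> W) : Prop :=
  ext_pairing w /\
  forall (M : LieSuper) (f : L -> L -> M), ext_pairing f ->
    exists h : W -> M,
      [/\ lie_hom h, (forall x y, h (w x y) = f x y)
        & forall h' : W -> M, lie_hom h' -> (forall x y, h' (w x y) = f x y) ->
            forall z, h' z = h z].

Definition ext_center (L W : LieSuper) (w : L -> L -> W) (x : L) : Prop :=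
  forall y, w x y = 0.

End Defs.

(* If N lies in the exterior centre, then x /\ y only depends on the classes
   of x and y modulo N (antisymmetry and the grading of N also kill y /\ n),
   so the exterior square of L descends to an exterior pairing on L/N.  The
   universal property of (L/N) /\ (L/N) then yields a map back to L /\ L that
   is a left inverse of the natural map.  Conversely, if the natural map is
   injective then n /\ y, which is sent to 0 /\ (y + N) = 0, must vanish. *)
From HB Require Import structures.
From mathcomp Require Import all_boot all_order all_algebra.
From Stdlib Require Import ClassicalEpsilon.
Import GRing.Theory.
Local Open Scope ring_scope.

Section LinearMaps.
Variables (F : fieldType) (V V' : lmodType F) (g : V -> V').
Hypothesis g_lin : forall a x y, g (a *: x + y) = a *: g x + g y.

Lemma lin_add x y : g (x + y) = g x + g y.
Proof. by rewrite -{1}[x]scale1r g_lin scale1r. Qed.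

Lemma lin0 : g 0 = 0.
Proof. by apply: (addIr (g 0)); rewrite add0r -lin_add addr0. Qed.

Lemma lin_sub x y : g (x - y) = g x - g y.
Proof. by rewrite addrC -scaleN1r g_lin scaleN1r addrC. Qed.

End LinearMaps.

Arguments lin_add {F V V' g}.
Arguments lin0 {F V V' g}.
Arguments lin_sub {F V V' g}.

Lemma subspaceB {F : fieldType} {V : lmodType F} {S : V -> Prop} :
  subspace S -> forall {x y}, S x -> S y -> S (x - y).
Proof. by move=> [_ SS] x y Sx Sy; rewrite addrC -scaleN1r; apply: SS. Qed.

Section LieSuperFacts.
Variables (F : fieldType) (L : LieSuper F).

Lemma lie_super_decomp (x : L) :
  exists x0 x1, [/\ hmg false x0, hmg true x1 & x = x0 + x1].
Proof.
by have [_ [_ [dec _]]] := LS_ax L; have [x0 [x1 [? [? ->]]]] := dec x; exists x0, x1.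
Qed.

Lemma hmg_component (a : bool) (q u0 u1 : L) :
  hmg a q -> hmg false u0 -> hmg true u1 -> q = u0 + u1 ->
  q = if a then u1 else u0.
Proof.
have [evS [odS [_ [ev_od0 _]]]] := LS_ax L.
rewrite /hmg /homog => + ev0 od1 equ; case: a => hq.
- have od0 : LS_od u0 by have := subspaceB odS hq od1; rewrite equ addrK.
  by rewrite equ (ev_od0 _ ev0 od0) add0r.
- have ev1 : LS_ev u1 by have := subspaceB evS hq ev0; rewrite equ addrC addKr.
  by rewrite equ (ev_od0 _ ev1 od1) addr0.
Qed.

End LieSuperFacts.

Arguments lie_super_decomp {F L}.
Arguments hmg_component {F L a q u0 u1}.

Section LieHoms.
Variable F : fieldType.

Lemma lie_hom_id (L : LieSuper F) : lie_hom (@id L).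
Proof. by []. Qed.

Lemma lie_hom_comp (L M P : LieSuper F) (f : L -> M) (g : M -> P) :
  lie_hom f -> lie_hom g -> lie_hom (g \o f).
Proof.
move=> [f_lin f_br f_hmg] [g_lin g_br g_hmg]; split=> /=.
- by move=> a x y; rewrite f_lin g_lin.
- by move=> x y; rewrite f_br g_br.
- by move=> b x /f_hmg /g_hmg.
Qed.

Lemma lie_hom_hmg_lift (L Q : LieSuper F) (pi : L -> Q) :
  lie_hom pi -> (forall q, exists x, pi x = q) ->
  forall a q, hmg a q -> exists x, hmg a x /\ pi x = q.
Proof.
move=> [pi_lin _ pi_hmg] pi_surj a q; have [x <-] := pi_surj q.
have [x0 [x1 [h0 h1 ->]]] := lie_super_decomp x => hq.
have := hmg_component hq (pi_hmg _ _ h0) (pi_hmg _ _ h1) (lin_add pi_lin x0 x1).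
by case: a hq => _ ->; [exists x1 | exists x0].
Qed.

End LieHoms.

Arguments lie_hom_comp {F L M P f g}.
Arguments lie_hom_hmg_lift {F L Q pi}.

Section ExteriorPairings.
Variables (F : fieldType) (L M : LieSuper F) (w : L -> L -> M).
Hypothesis w_ext : ext_pairing w.

Lemma ext_pairingDl z x y : w (x + y) z = w x z + w y z.
Proof. by apply: (@lin_add _ _ _ (w^~ z) _) => a ? ?; case: w_ext => ->. Qed.

Lemma ext_pairingDr z x y : w z (x + y) = w z x + w z y.
Proof. by apply: (@lin_add _ _ _ (w z) _) => a ? ?; case: w_ext => _ [->]. Qed.

Lemma ext_pairing0l y : w 0 y = 0.
Proof. by apply: (@lin0 _ _ _ (w^~ y) _) => a ? ?; case: w_ext => ->. Qed.

(* Antisymmetry only holds for homogeneous arguments, so the grading of the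
   ideal is what lets a left-central n also annihilate from the right. *)
Lemma ext_center_graded_idealr (N : L -> Prop) :
  graded_ideal N -> (forall n, N n -> ext_center w n) ->
  forall y n, N n -> w y n = 0.
Proof.
move=> [_ N_dec _ _] N_center y n Nn.
have w_skew a b u v : hmg a u -> hmg b v -> N v -> w u v = 0.
  move=> hu hv Nv; have [_ [_ [_ [_ [_ [_ [skew _]]]]]]] := w_ext.
  by have := skew _ _ _ _ hu hv; rewrite (N_center v Nv u) scaler0 addr0.
have [n0 [n1 [Nn0 ev0 Nn1 od1 ->]]] := N_dec n Nn.
have [y0 [y1 [ev_y0 od_y1 ->]]] := lie_super_decomp y.
rewrite !ext_pairingDl !ext_pairingDr.
by rewrite (w_skew false false y0 n0) // (w_skew false true y0 n1) //
  (w_skew true false y1 n0) // (w_skew true true y1 n1) // !addr0.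
Qed.

End ExteriorPairings.

Arguments ext_pairingDl {F L M w}.
Arguments ext_pairingDr {F L M w}.
Arguments ext_pairing0l {F L M w}.
Arguments ext_center_graded_idealr {F L M w} w_ext {N}.

Section QuotientPairing.
Variables (F : fieldType) (L Q : LieSuper F) (pi : L -> Q).
Hypotheses (pi_hom : lie_hom pi) (pi_surj : forall q, exists x, pi x = q).

Lemma ext_pairing_quotient (M : LieSuper F) (w : L -> L -> M) (f : Q -> Q -> M) :
  ext_pairing w -> (forall x y, f (pi x) (pi y) = w x y) -> ext_pairing f.
Proof.
move=> [w1 [w2 [w3 [w4 [w5 [w6 [w7 w8]]]]]]] fpi.
have [pi_lin pi_br _] := pi_hom.
have lift := lie_hom_hmg_lift pi_hom pi_surj.
split.
  move=> a q q' r; have [x <-] := pi_surj q; have [x' <-] := pi_surj q'.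
  by have [y <-] := pi_surj r; rewrite -pi_lin !fpi w1.
split.
  move=> a q q' r; have [x <-] := pi_surj q; have [x' <-] := pi_surj q'.
  by have [y <-] := pi_surj r; rewrite -pi_lin !fpi w2.
split.
  move=> a b q r /lift[x [hx <-]] /lift[y [hy <-]].
  by rewrite fpi; exact: (w3 _ _ _ _ hx hy).
split.
  move=> a a' b q q' r /lift[x [hx <-]] /lift[x' [hx' <-]] /lift[y [hy <-]].
  by rewrite -!pi_br !fpi; exact: (w4 _ _ _ _ _ _ hx hx' hy).
split.
  move=> a b b' q r r' /lift[x [hx <-]] /lift[y [hy <-]] /lift[y' [hy' <-]].
  by rewrite -!pi_br !fpi; exact: (w5 _ _ _ _ _ _ hx hy hy').
split.
  move=> a b a' b' q r q' r' /lift[x [hx <-]] /lift[y [hy <-]].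
  move=> /lift[x' [hx' <-]] /lift[y' [hy' <-]].
  by rewrite -!pi_br !fpi; exact: (w6 _ _ _ _ _ _ _ _ hx hy hx' hy').
split.
  move=> a b q r /lift[x [hx <-]] /lift[y [hy <-]].
  by rewrite !fpi; exact: (w7 _ _ _ _ hx hy).
by move=> q /(lift false)[x [hx <-]]; rewrite fpi; exact: (w8 _ hx).
Qed.

Variables (N : L -> Prop) (W : LieSuper F) (w : L -> L -> W).
Hypotheses (N_ideal : graded_ideal N) (pi_ker : forall x, pi x = 0 <-> N x).
Hypotheses (w_ext : ext_pairing w) (N_center : forall n, N n -> ext_center w n).

Lemma ext_pairing_mod_center x x' y y' :
  pi x = pi x' -> pi y = pi y' -> w x y = w x' y'.
Proof.
have [pi_lin _ _] := pi_hom.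
have N_sub u u' : pi u = pi u' -> N (u - u').
  by move=> e; apply/pi_ker; rewrite (lin_sub pi_lin) e subrr.
move=> /N_sub Nx /N_sub Ny.
rewrite -[x](subrK x') (ext_pairingDl w_ext) (N_center _ Nx) add0r.
rewrite -[y](subrK y') (ext_pairingDr w_ext).
by rewrite (ext_center_graded_idealr w_ext N_ideal N_center _ _ Ny) add0r.
Qed.

Lemma ext_pairing_descends :
  exists f : Q -> Q -> W,
    ext_pairing f /\ forall x y, f (pi x) (pi y) = w x y.
Proof.
have sec q : {x | pi x = q} := constructive_indefinite_description _ (pi_surj q).
pose f q r := w (sval (sec q)) (sval (sec r)).
have fpi x y : f (pi x) (pi y) = w x y.
  exact: ext_pairing_mod_center (svalP (sec (pi x))) (svalP (sec (pi y))).
by exists f; split=> //; apply: ext_pairing_quotient w_ext fpi.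
Qed.

End QuotientPairing.

Arguments ext_pairing_descends {F L Q pi} pi_hom pi_surj {N W w}.

Lemma ext_square_hom_id (F : fieldType) (L W : LieSuper F) (w : L -> L -> W)
  (h : W -> W) :
  is_ext_square w -> lie_hom h -> (forall x y, h (w x y) = w x y) ->
  forall z, h z = z.
Proof.
move=> [w_ext w_univ] h_hom hw z.
have [h0 [_ _ h0_uniq]] := w_univ _ w w_ext.
have id_h0 : id z = h0 z := h0_uniq id (@lie_hom_id _ W) (fun _ _ => erefl) z.
by rewrite (h0_uniq h h_hom hw) -id_h0.
Qed.

Theorem mainTheorem15 (F : fieldType)
  (char2 : (2%:R : F) != 0) (char3 : (3%:R : F) != 0)
  (L : LieSuper F) (N : L -> Prop) (HN : graded_ideal N)
  (Q : LieSuper F) (pi : L -> Q) (Hpi : lie_hom pi)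
  (pi_surj : forall q : Q, exists x : L, pi x = q)
  (pi_ker : forall x : L, pi x = 0 <-> N x)
  (W : LieSuper F) (w : L -> L -> W) (Hw : is_ext_square w)
  (W' : LieSuper F) (w' : Q -> Q -> W') (Hw' : is_ext_square w')
  (phi : W -> W') (Hphi : lie_hom phi)
  (Hphiw : forall x y : L, phi (w x y) = w' (pi x) (pi y)) :
  (forall x : L, N x -> ext_center w x) <-> injective phi.
Proof.
have [[w'_ext w'_univ] [w_ext _]] := (Hw', Hw).
split=> [N_center | phi_inj n Nn y]; last first.
  apply: phi_inj; have [phi_lin _ _] := Hphi.
  by rewrite Hphiw (proj2 (pi_ker n) Nn) (ext_pairing0l w'_ext) (lin0 phi_lin).
have [f [f_ext fpi]] := ext_pairing_descends Hpi pi_surj HN pi_ker w_ext N_center.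
have [h [h_hom hw' _]] := w'_univ _ f f_ext.
apply: (can_inj (g := h)); apply: ext_square_hom_id Hw _ _.
  exact: lie_hom_comp Hphi h_hom.
by move=> x y /=; rewrite Hphiw hw' fpi.
Qed.
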